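(* Let $d\ge 2$ and let $n_k$ denote the number of vertices of the $k$-iterated line digraph $L^k(CK(d,4))$ of the cyclic Kautz digraph $CK(d,4)$; equivalently, $n_k$ is the number of words $a_1a_2\cdots a_{k+4}$ over the alphabet $\{0,1,\dots,d\}$ such that every block of four consecutive letters $a_ia_{i+1}a_{i+2}a_{i+3}$ satisfies $a_i\ne a_{i+1}$, $a_{i+1}\ne a_{i+2}$, $a_{i+2}\ne a_{i+3}$ and $a_i\ne a_{i+3}$. Then $n_0=d^4+d$, $n_1=d^5-d^4+d^3+2d^2-d$, and $$n_k=(d-1)\,n_{k-1}+n_{k-2}\qquad\text{for all } k\ge 2.$$ In particular, for $d=2$ the sequence is $18,30,48,78,126,\dots$ (satisfying the Fibonacci recurrence).
   Context: The cyclic Kautz digraph $CK(d,4)$ has as vertices all words $a_1a_2a_3a_4$ over $\{0,1,\dots,d\}$ with $a_i\ne a_{i+1}$ for $i=1,2,3$ and $a_1\ne a_4$, and an arc from $a_1a_2a_3a_4$ to $a_2a_3a_4a_5$ whenever $a_5\ne a_4$ and $a_5\ne a_2$. The line digraph $LG$ has as vertex set the set of arcs of $G$, with an arc from $e$ to $f$ whenever the head of $e$ equals the tail of $f$; $L^0G=G$, $L^kG=L(L^{k-1}G)$. *)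

From mathcomp Require Import all_boot.
Set Implicit Arguments. Unset Strict Implicit. Unset Printing Implicit Defensive.

Record digraph := Digraph { dvert : finType; darc : rel dvert }.

Definition line_digraph (G : digraph) : digraph :=
  @Digraph {p : dvert G * dvert G | @darc G p.1 p.2}
           (fun e f => (val e).2 == (val f).1).

Definition iter_line (k : nat) (G : digraph) : digraph := iter k line_digraph G.

Definition word4 (d : nat) : Type := ('I_d.+1 * 'I_d.+1 * 'I_d.+1 * 'I_d.+1)%type.

Definition ck_vertex (d : nat) (w : word4 d) : bool :=
  let: (a1, a2, a3, a4) := w in
  [&& a1 != a2, a2 != a3, a3 != a4 & a1 != a4].

Definition ck_arc (d : nat) (v w : {w : word4 d | ck_vertex w}) : bool :=
  let: (a1, a2, a3, a4) := val v in
  let: (b1, b2, b3, b4) := val w in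
  [&& b1 == a2, b2 == a3, b3 == a4, b4 != a4 & b4 != a2].

Definition CK4 (d : nat) : digraph :=
  @Digraph {w : word4 d | ck_vertex w} (@ck_arc d).

Definition nCK (d k : nat) : nat := #|dvert (iter_line k (CK4 d))|.

From mathcomp Require Import all_boot zify.
Set Implicit Arguments. Unset Strict Implicit. Unset Printing Implicit Defensive.

(* A vertex of L^k G is a walk of k arcs in G, so n_k is the total number of
   k-walks in CK(d,4).  The walks leaving a vertex a1a2a3a4 are determined by
   the letters b with b <> a4 and b <> a2, so their number depends only on
   whether a2 = a4; the two counts p_k (a2 = a4) and q_k (a2 <> a4) evolve by
   the matrix [[1, d-1], [1, d-2]], of trace d-1 and determinant -1.  By
   Cayley-Hamilton every linear combination of p_k and q_k, in particular n_k,
   satisfies x_(k+2) = (d-1) x_(k+1) + x_k. *)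

Fixpoint nwalks (G : digraph) (k : nat) (v : dvert G) : nat :=
  if k is k'.+1 then \sum_(w | darc v w) nwalks k' w else 1.

Lemma sum_line_vertices (G : digraph) (F : dvert G -> dvert G -> nat) :
  \sum_(e : dvert (line_digraph G)) F (val e).1 (val e).2 =
  \sum_u \sum_(v | darc u v) F u v.
Proof. by rewrite pair_big_dep (big_sub [pred p : dvert G * dvert G | darc p.1 p.2]). Qed.

Lemma nwalks_line (G : digraph) k (e : dvert (line_digraph G)) :
  nwalks k e = nwalks k (val e).2.
Proof.
elim: k e => [//|k IHk] e /=.
under eq_bigr do rewrite IHk.
rewrite big_mkcond (sum_line_vertices (fun u v => if (val e).2 == u then nwalks k v else 0)).
rewrite (bigD1 (val e).2) //= eqxx [X in _ + X]big1 ?addn0 // => u /negbTE neq_u.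
by apply: big1 => v _; rewrite eq_sym neq_u.
Qed.

Lemma sum_nwalks_iter_line (G : digraph) k j :
  \sum_(x : dvert (iter_line k G)) nwalks j x = \sum_(v : dvert G) nwalks (j + k) v.
Proof.
elim: k j => [|k IHk] j; first by rewrite addn0.
rewrite addnS -addSn -IHk /iter_line iterS.
under eq_bigr do rewrite nwalks_line.
exact: (sum_line_vertices (fun _ v => nwalks j v)).
Qed.

Lemma card_iter_line (G : digraph) k :
  #|dvert (iter_line k G)| = \sum_(v : dvert G) nwalks k v.
Proof. by rewrite -sum1_card -[k]add0n -sum_nwalks_iter_line. Qed.

Lemma card_predC_uniq (T : finType) (s : seq T) :
  uniq s -> #|[predC s]| = #|T| - size s.
Proof. by move=> /card_uniqP s_uniq; rewrite -(cardC [in s]) -s_uniq addKn. Qed.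

Lemma sum_notin_const (T : finType) (s : seq T) c :
  uniq s -> \sum_(b | b \notin s) c = (#|T| - size s) * c.
Proof. by move=> s_uniq; rewrite sum_nat_const -card_predC_uniq. Qed.

Lemma sum_notin_if (T : finType) (s : seq T) y (A B : nat) :
  uniq s -> y \notin s ->
  \sum_(b | b \notin s) (if b == y then A else B) = A + (#|T| - (size s).+1) * B.
Proof.
move=> s_uniq ys; rewrite (bigD1 y) //= eqxx.
rewrite (eq_bigr (fun _ => B)) => [|b /andP[_ /negbTE->]] //.
rewrite -(sum_notin_const (s := y :: s)) /= ?ys //.
by congr (_ + _); apply: eq_bigl => b; rewrite inE negb_or andbC.
Qed.

Lemma sum_ck_arc d (v : dvert (CK4 d)) a1 a2 a3 a4 (F : word4 d -> nat) :
  val v = (a1, a2, a3, a4) ->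
  \sum_(w | darc v w) F (val w) = \sum_(b | b \notin [:: a4; a2]) F (a2, a3, a4, b).
Proof.
move=> v_def; have := valP v; rewrite v_def => /and4P[ne12 ne23 ne34 _].
pose next b : dvert (CK4 d) := insubd v (a2, a3, a4, b).
have next_val b : val (next b) = if b \notin [:: a4; a2] then (a2, a3, a4, b) else val v.
  by rewrite val_insubd /ck_vertex ne23 ne34 !inE negb_or !(eq_sym b).
rewrite (reindex_onto next (fun w => (val w).2)) => [|w]; last first.
  rewrite /= /ck_arc v_def; case w_def: (val w) => [[[b1 b2] b3] b4].
  case/and5P=> /eqP e1 /eqP e2 /eqP e3 nb4 nb2; apply: val_inj.
  by rewrite next_val w_def /= !inE negb_or nb4 nb2 w_def e1 e2 e3.
have next_arc b : darc v (next b) && ((val (next b)).2 == b) = (b \notin [:: a4; a2]).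
  case: ifP (next_val b) => [b_notin|_] nb_def;
    rewrite nb_def /= /ck_arc -/(val (next b)) nb_def -/(val v) v_def /=.
    by move: b_notin; rewrite !inE negb_or !eqxx andbT.
  by rewrite (negbTE ne12).
by apply: eq_big => // b; rewrite next_arc next_val => ->.
Qed.

Fixpoint ck_pq (d k : nat) : nat * nat :=
  if k is k'.+1 then
    let pq := ck_pq d k' in (pq.1 + (d - 1) * pq.2, pq.1 + (d - 2) * pq.2)
  else (1, 1).

Definition ck_weight d k (w : word4 d) : nat :=
  let: (_, a2, _, a4) := w in if a4 == a2 then (ck_pq d k).1 else (ck_pq d k).2.

Lemma nwalks_CK4 d k (v : dvert (CK4 d)) : nwalks k v = ck_weight k (val v).
Proof.
elim: k v => [|k IHk] v; first by case: (val v) => [[[a1 a2] a3] a4] /=; case: ifP.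
case v_def: (val v) => [[[a1 a2] a3] a4]; have := valP v.
rewrite v_def => /and4P[_ ne23 ne34 _]; have ne32 : a3 != a2 by rewrite eq_sym.
rewrite /= (eq_bigr _ (fun w _ => IHk w)) (sum_ck_arc _ v_def) /=.
have [-> | ne42] := eqVneq a4 a2.
  rewrite (eq_bigl (fun b => b \notin [:: a2])) => [|b]; last by rewrite !inE orbb.
  by rewrite sum_notin_if ?inE // [in LHS]card_ord subSS.
by rewrite sum_notin_if /= ?inE ?negb_or ?ne42 ?ne34 ?ne32 // [in LHS]card_ord subSS.
Qed.

Lemma sum_prod (I J : finType) (F : I * J -> nat) :
  \sum_p F p = \sum_i \sum_j F (i, j).
Proof. by rewrite pair_bigA; apply: eq_bigr => -[]. Qed.

Lemma sum_ck_vertex d (F : word4 d -> nat) :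
  \sum_(w | ck_vertex w) F w =
  \sum_a1 \sum_(a2 | a2 \notin [:: a1]) \sum_(a3 | a3 \notin [:: a2])
    \sum_(a4 | a4 \notin [:: a3; a1]) F (a1, a2, a3, a4).
Proof.
rewrite big_mkcond !sum_prod; apply: eq_bigr => a1 _.
rewrite [RHS]big_mkcond; apply: eq_bigr => a2 _.
rewrite inE; have [-> | ne21] := eqVneq a2 a1.
  by rewrite big1 // => a3 _; rewrite big1 // => a4 _; rewrite /ck_vertex eqxx.
rewrite [RHS]big_mkcond; apply: eq_bigr => a3 _.
rewrite inE; have [-> | ne32] := eqVneq a3 a2.
  by rewrite big1 // => a4 _; rewrite /ck_vertex eqxx andbF.
rewrite [RHS]big_mkcond; apply: eq_bigr => a4 _.
by rewrite /ck_vertex !inE negb_or eq_sym ne21 eq_sym ne32 /= !(eq_sym a4).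
Qed.

Lemma sum_ck_weight d k :
  \sum_(w : word4 d | ck_vertex w) ck_weight k w =
  (d + 1) * (d * (d * (ck_pq d k).1 + (d - 1) ^ 2 * (ck_pq d k).2)).
Proof.
set p := (ck_pq d k).1; set q := (ck_pq d k).2.
have inner (a1 a2 : 'I_d.+1) : a2 \notin [:: a1] ->
    \sum_(a3 | a3 \notin [:: a2]) \sum_(a4 | a4 \notin [:: a3; a1])
      (if a4 == a2 then p else q) = (p + (d - 1) * q) + (d - 1) * (p + (d - 2) * q).
  rewrite inE => ne21; rewrite (bigD1 a1) ?inE 1?eq_sym //=.
  rewrite (eq_bigl (fun b => b \notin [:: a1])) => [|b]; last by rewrite !inE orbb.
  rewrite sum_notin_if ?inE // [in LHS]card_ord subSS; congr (_ + _).
  rewrite (eq_bigl (fun b => b \notin [:: a2; a1])) => [|b]; last by rewrite !inE negb_or.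
  rewrite (eq_bigr (fun _ => p + (d - 2) * q)) => [|a3]; last first.
    rewrite !inE negb_or => /andP[ne32 ne31].
    have a2_notin : a2 \notin [:: a3; a1] by rewrite !inE negb_or eq_sym ne32.
    have s_uniq : uniq [:: a3; a1] by rewrite /= inE ne31.
    by rewrite (sum_notin_if _ _ s_uniq a2_notin) card_ord.
  by rewrite sum_notin_const /= ?inE ?ne21 // [in LHS]card_ord subSS.
rewrite sum_ck_vertex (eq_bigr (fun _ => d * ((p + (d - 1) * q) + (d - 1) * (p + (d - 2) * q)))).
  rewrite sum_nat_const card_ord addn1.
  by rewrite /p /q; case: d {inner p q} => [//|d]; rewrite !subSS subn0; nia.
move=> a1 _; rewrite (eq_bigr _ (inner a1)) sum_notin_const //.
by rewrite card_ord subSS subn0.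
Qed.

Lemma nCK_formula d k :
  nCK d k = (d + 1) * (d * (d * (ck_pq d k).1 + (d - 1) ^ 2 * (ck_pq d k).2)).
Proof.
rewrite /nCK card_iter_line (eq_bigr _ (fun v _ => nwalks_CK4 k v)).
by rewrite -sum_ck_weight (big_sub [pred w | ck_vertex w]).
Qed.

Lemma ck_pqSS d k : 1 < d ->
  ck_pq d k.+2 = ((d - 1) * (ck_pq d k.+1).1 + (ck_pq d k).1,
                  (d - 1) * (ck_pq d k.+1).2 + (ck_pq d k).2).
Proof.
case: d => [|[|d]] // _; rewrite /= !subSS subn0.
set p := (ck_pq _ k).1; set q := (ck_pq _ k).2.
congr (_, _); nia.
Qed.

Lemma nCK0 d : nCK d 0 = d ^ 4 + d.
Proof.
rewrite nCK_formula /= !muln1; case: d => [//|m].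
have -> : m.+1 - 1 = m by lia.
rewrite -addn1 !expnS expn0 !muln1; nia.
Qed.

Lemma nCK1 d : 1 < d -> nCK d 1 = d ^ 5 - d ^ 4 + d ^ 3 + 2 * d ^ 2 - d.
Proof.
move=> d_gt1; rewrite nCK_formula /= !muln1.
have [m def_d] : exists m, d = m.+1 by exists d.-1; lia.
have -> : d - 1 = m by lia.
have -> : 1 + (d - 2) = m by lia.
rewrite def_d -addn1 !expnS expn0 !muln1; nia.
Qed.

Lemma nCK_rec d k : 1 < d -> nCK d k.+2 = (d - 1) * nCK d k.+1 + nCK d k.
Proof.
move=> d_gt1; rewrite !nCK_formula ck_pqSS //=.
set p1 := (ck_pq d k.+1).1; set q1 := (ck_pq d k.+1).2.
set p0 := (ck_pq d k).1; set q0 := (ck_pq d k).2; set m := d - 1.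
clearbody p1 q1 p0 q0 m; nia.
Qed.

Theorem mainTheorem10 (d : nat) (hd : 2 <= d) :
  [/\ nCK d 0 = d ^ 4 + d,
      nCK d 1 = d ^ 5 - d ^ 4 + d ^ 3 + 2 * d ^ 2 - d,
      (forall k, 2 <= k -> nCK d k = (d - 1) * nCK d k.-1 + nCK d k.-2) &
      (d = 2 -> [/\ nCK d 0 = 18, nCK d 1 = 30, nCK d 2 = 48, nCK d 3 = 78
                  & nCK d 4 = 126])].
Proof.
split.
- exact: nCK0.
- exact: nCK1.
- by case=> [|[|k]] // _; exact: nCK_rec.
- by move=> ->; rewrite !nCK_formula.
Qed.
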